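(* Let $N\ge1$, $1\le S\le N$, $L$ a band-width vector, $\dot W$ an $L$-admissible matrix, $W_\varepsilon=\mathrm{Id}+\varepsilon\dot W$, $\beta\in\Gamma$ and $k\in\mathbb Z$. Then there exists $\gamma_k>0$ such that for every $0<\varepsilon<\gamma_k$ the matrix $P_{\varepsilon,\beta}:=D_{k,\beta,L}W_\varepsilon$ has $N$ distinct eigenvalues.
   Context: A band-width vector is $L=(L_1,\dots,L_S)$ of positive integers with $\sum_sL_s=N$; $N_0=0$, $N_s=N_{s-1}+L_s$, $B_s=\{j:N_{s-1}<j\le N_s\}$. For $\beta\in\mathbb R^S$, $D_{k,\beta,L}$ is the $N\times N$ diagonal matrix whose $j$-th diagonal entry is $e^{-2\pi ik\beta_s}$ for $j\in B_s$. $\dot W$ is $L$-admissible if it is real symmetric and (1) $\dot W_{ij}\ge0$ for $i\ne j$, $\sum_j\dot W_{ij}=0$ for all $i$; (2) $\dot W$ has $N$ distinct eigenvalues; (3) for each $s$, $\hat W_s=(\dot W_{jk})_{j,k\in B_s}$ has $L_s$ distinct eigenvalues. $\Gamma=\{\beta\in\mathbb R^S: e^{-2\pi ik\beta_{s_1}}\neq e^{-2\pi ik\beta_{s_2}}\text{ for all }k\in\mathbb Z\setminus\{0\}\text{ and all }s_1\neq s_2\}$. *)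

From HB Require Import structures.
From mathcomp Require Import all_boot all_order all_algebra.
From mathcomp Require Import all_classical all_reals.
From mathcomp Require Import trigo.
From mathcomp Require Import complex.
Set Implicit Arguments. Unset Strict Implicit. Unset Printing Implicit Defensive.
Import Order.TTheory GRing.Theory Num.Theory.
Local Open Scope ring_scope.

(* Conventions: indices are 0-based.  A band-width vector is L : 'I_S -> nat,
   block s (0-based) is B_s = { j : Nstart L s <= j < Nstart L s + L s }. *)

Definition Nstart (S : nat) (L : 'I_S -> nat) (s : 'I_S) : nat :=
  (\sum_(t < S | (t < s)%N) L t)%N.

Definition in_block (S : nat) (L : 'I_S -> nat) (s : 'I_S) (j : nat) : bool :=
  (Nstart L s <= j < Nstart L s + L s)%N.

Definition bandwidth_vector (N S : nat) (L : 'I_S -> nat) : Prop :=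
  (forall s, (0 < L s)%N) /\ (\sum_(s < S) L s)%N = N.

Definition phase (R : realType) (k : int) (b : R) : complex R :=
  let th := 2 * pi * (k%:~R) * b in Complex (cos th) (- sin th).

(* D_{k,beta,L}: diagonal entry j is e^{-2 pi i k beta_s} for j in B_s
   (the blocks partition {0..N-1}, so exactly one s contributes) *)
Definition Dmat (R : realType) (N S : nat) (L : 'I_S -> nat) (k : int)
  (beta : 'I_S -> R) : 'M[complex R]_N :=
  \matrix_(i < N, j < N)
    if i == j then \sum_(s < S | in_block L s i) phase k (beta s) else 0.

(* entry of a matrix addressed by natural numbers (0 outside the range) *)
Definition mx_nat (R : nzRingType) (N : nat) (W : 'M[R]_N) (i j : nat) : R :=
  match insub i, insub j with
  | Some i', Some j' => W i' j'
  | _, _ => 0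
  end.

Definition diag_block (R : nzRingType) (N S : nat) (L : 'I_S -> nat)
  (W : 'M[R]_N) (s : 'I_S) : 'M[R]_(L s) :=
  \matrix_(a < L s, b < L s) mx_nat W (Nstart L s + a) (Nstart L s + b).

Definition has_n_distinct_eigenvalues (F : fieldType) (n : nat) (M : 'M[F]_n) : Prop :=
  exists ev : seq F, [/\ size ev = n, uniq ev & all (eigenvalue M) ev].

Definition admissible (R : realType) (N S : nat) (L : 'I_S -> nat) (Wd : 'M[R]_N) : Prop :=
  [/\ Wd^T = Wd,
      (forall i j : 'I_N, i != j -> 0 <= Wd i j),
      (forall i : 'I_N, \sum_(j < N) Wd i j = 0),
      has_n_distinct_eigenvalues Wd &
      (forall s : 'I_S, has_n_distinct_eigenvalues (diag_block L Wd s))].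

Definition Gamma_set (R : realType) (S : nat) (beta : 'I_S -> R) : Prop :=
  forall (k : int) (s1 s2 : 'I_S), k != 0 -> s1 != s2 ->
    phase k (beta s1) != phase k (beta s2).

Definition Pmat (R : realType) (N S : nat) (L : 'I_S -> nat) (k : int)
  (beta : 'I_S -> R) (Wd : 'M[R]_N) (eps : R) : 'M[complex R]_N :=
  Dmat N L k beta *m map_mx (fun x : R => (x%:C)%C) (1%:M + eps *: Wd).

From HB Require Import structures.
From mathcomp Require Import all_boot all_order all_algebra.
From mathcomp Require Import all_classical all_reals.
From mathcomp Require Import trigo.
From mathcomp Require Import complex.
From mathcomp Require Import ring lra.
From mathcomp Require Import topology normedtype.
Import Order.TTheory GRing.Theory Num.Theory.
Local Open Scope ring_scope.
Local Open Scope classical_set_scope.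
Local Open Scope complex_scope.

(* For k = 0 the matrix is Id + eps Wd, with the distinct eigenvalues 1 + eps mu.
   For k <> 0 the block phases d_s = e^{-2 pi i k beta_s} are pairwise distinct.
   At lam = d_s (1 + eps z) the characteristic polynomial of P_eps factors as a
   nonzero constant times det (A_s(z) + eps B_s(z)), where det A_s(z) vanishes
   exactly at the eigenvalues z of the block hat W_s.  So for an eigenvalue mu of
   hat W_s and a small rho > 0, as eps -> 0 the polynomial is much smaller at
   d_s (1 + eps mu) than at d_s (1 + eps (mu + rho)), which forces a root within
   eps rho of d_s (1 + eps mu): a polynomial of degree n without roots within r
   of x satisfies |p(y)| <= 2^n |p(x)| whenever |y - x| <= r.  For small eps these N discs are pairwise disjoint:
   inside a block because rho is below half the eigenvalue gaps of hat W_s, across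
   blocks because the centres tend to the distinct d_s. *)

(* The modulus on R[i] as an R-valued norm; the norm `|z| of the numClosedField
   R[i] takes values in R[i]. *)
Notation cnorm := (@Num.norm _ (Rcomplex _)).

Section ComplexNorm.
Context {R : rcfType}.
Implicit Types (x y : R[i]) (p : {poly R[i]}).

Lemma cnorm_ge0 x : 0 <= cnorm x.
Proof. exact: normr_ge0. Qed.

Lemma cnorm_gt0 x : x != 0 -> 0 < cnorm x.
Proof. by move=> x0; rewrite (@normr_gt0 _ (Rcomplex R)). Qed.

Lemma cnormM x y : cnorm (x * y) = cnorm x * cnorm y.
Proof. exact: Normc.normcM. Qed.

Lemma cnorm1 : cnorm (1 : R[i]) = 1.
Proof. exact: Normc.normc1. Qed.

Lemma cnorm_prod (I : Type) (r : seq I) (F : I -> R[i]) :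
  cnorm (\prod_(i <- r) F i) = \prod_(i <- r) cnorm (F i).
Proof. exact: (big_morph _ cnormM cnorm1). Qed.

Lemma cnormR (a : R) : cnorm a%:C = `|a|.
Proof. by rewrite -[LHS]/(Normc.normc _) /= expr0n addr0 sqrtr_sqr. Qed.

Lemma cnormX x n : cnorm (x ^+ n) = cnorm x ^+ n.
Proof. by elim: n => [|n IH]; rewrite ?expr0 ?cnorm1 // !exprS cnormM IH. Qed.

Lemma cnorm_horner_le p x : cnorm x <= 1 ->
  cnorm p.[x] <= \sum_(i < size p) cnorm p`_i.
Proof.
move=> x_le1; rewrite horner_coef; apply: le_trans (ler_norm_sum _ _ _) _.
apply: ler_sum => i _; rewrite cnormM cnormX -[leRHS]mulr1 ler_wpM2l ?cnorm_ge0 //.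
by rewrite exprn_ile1 ?cnorm_ge0.
Qed.

Lemma poly_root_near p x y r :
  cnorm (y - x) <= r -> 2 ^+ size p * cnorm p.[x] < cnorm p.[y] ->
  exists z, root p z /\ cnorm (z - x) < r.
Proof.
move=> yx_le gap; have [rs p_eq] := closed_field_poly_normal p.
have p_at v : p.[v] = lead_coef p * \prod_(z <- rs) (v - z).
  by rewrite {1}p_eq hornerZ horner_prod; under eq_bigr do rewrite hornerXsubC.
have [/hasP[z z_rs zx_lt]|far] := boolP (has (fun z => cnorm (z - x) < r) rs).
  by exists z; rewrite rootE p_at (big_rem z) //= subrr mul0r mulr0.
have [p0|p_neq0] := eqVneq p 0; first by move: gap; rewrite p0 !horner0 normr0 mulr0 ltxx.
have size_p : size p = (size rs).+1.
  by rewrite p_eq size_scale ?size_prod_XsubC ?lead_coef_eq0.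
(* Every root w with r <= |x - w| has |y - w| <= |y - x| + |x - w| <= 2 |x - w|. *)
have near_le : \prod_(z <- rs) cnorm (y - z) <= 2 ^+ size rs * \prod_(z <- rs) cnorm (x - z).
  have -> : 2 ^+ size rs = \prod_(z <- rs) (2 : R).
    by rewrite big_const_seq count_predT iter_mulr mulr1.
  rewrite -big_split /= [leLHS]big_seq [leRHS]big_seq.
  apply: ler_prod => w w_rs; rewrite cnorm_ge0 /=.
  have wx_ge : r <= cnorm (x - w).
    by rewrite distrC leNgt; apply: contraNN far => wx_lt; apply/hasP; exists w.
  have := ler_normD (y - x : Rcomplex R) (x - w); rewrite addrA subrK => /le_trans; apply.
  by rewrite mulr2n mulrDl mul1r lerD // (le_trans yx_le).
exfalso; move: gap; rewrite !p_at !cnormM !cnorm_prod size_p exprS.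
set c := cnorm _; set t := 2 ^+ _; set Px := \prod_(_ <- _) _; set Py := \prod_(_ <- _) _.
have Py_le : c * Py <= t * (c * Px) by rewrite mulrCA ler_wpM2l ?cnorm_ge0.
have : 0 <= t * (c * Px).
  by rewrite !mulr_ge0 ?exprn_ge0 ?cnorm_ge0 ?prodr_ge0 // => z _; exact: cnorm_ge0.
lra.
Qed.

End ComplexNorm.

Lemma det_addZ_near {R : rcfType} {n} (A B : 'M[R[i]]_n) (delta : R) : 0 < delta ->
  \forall e \near 0^'+, cnorm (\det (A + e%:C *: B) - \det A) < delta.
Proof.
move=> delta_gt0.
pose Q := \det (map_mx polyC A + 'X *: map_mx polyC B).
have Q_at c : Q.[c] = \det (A + c *: B).
  rewrite /Q -horner_evalE -det_map_mx; congr (\det _); apply/matrixP => i j.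
  by rewrite !mxE /= /horner_eval hornerD hornerM hornerX !hornerC.
have /factor_theorem[q Qq] : root (Q - Q.[0]%:P) 0.
  by rewrite rootE hornerD hornerN hornerC subrr.
have det_diff c : \det (A + c *: B) - \det A = q.[c] * c.
  have := congr1 (horner^~ c) Qq.
  by rewrite /= hornerD hornerN hornerC hornerM hornerXsubC subr0 !Q_at scale0r addr0.
set K := \sum_(i < size q) cnorm q`_i.
have K_ge0 : 0 <= K by apply: sumr_ge0 => i _; exact: cnorm_ge0.
near=> e.
have e_gt0 : 0 < e by near: e; exact: nbhs_right_gt.
have e_le1 : e <= 1 by near: e; exact: nbhs_right_le.
have e_lt : e < delta / (K + 1).
  by near: e; apply: nbhs_right_lt; rewrite divr_gt0 // ltr_wpDl.
have qe_le : cnorm q.[e%:C] <= K by rewrite cnorm_horner_le // cnormR ger0_norm ?ltW.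
rewrite det_diff cnormM cnormR ger0_norm ?ltW //.
move: e_lt; rewrite ltr_pdivlMr ?ltr_wpDl // => e_lt.
nra.
Unshelve. all: by end_near.
Qed.

Section DistinctEigenvalues.
Context {F : fieldType} {n : nat}.
Implicit Types A : 'M[F]_n.

Lemma distinct_eigenvaluesP A : has_n_distinct_eigenvalues A ->
  exists mu : 'I_n -> F, injective mu /\ forall x, root (char_poly A) x = (x \in codom mu).
Proof.
case=> ev [ev_size ev_uniq ev_eig]; exists (fun a => nth 0 ev a); split.
  by move=> a b /eqP; rewrite nth_uniq ?ev_size // => /eqP/val_inj.
have -> : codom (fun a : 'I_n => nth 0 ev a) = ev.
  by rewrite codomE (@eq_map _ _ _ (nth 0 ev \o val)) // map_comp val_enum_ord -ev_size; exact: mkseq_nth.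
move=> x; apply/idP/idP => [x_root|/(allP ev_eig)]; last by rewrite eigenvalue_root_char.
apply: contraT => x_notin.
have roots : all (root (char_poly A)) (x :: ev).
  by rewrite /= x_root; apply/allP => y /(allP ev_eig); rewrite eigenvalue_root_char.
have := max_poly_roots (monic_neq0 (char_poly_monic A)) roots.
by rewrite /= x_notin ev_uniq size_char_poly ev_size ltnn; apply.
Qed.

Lemma distinct_eigenvalues_inj A (T : finType) (lam : T -> F) :
  #|T| = n -> injective lam -> (forall p, eigenvalue A (lam p)) ->
  has_n_distinct_eigenvalues A.
Proof.
move=> card_T lam_inj lam_eig; exists (map lam (enum T)); split.
- by rewrite size_map -cardE.
- by rewrite map_inj_uniq ?enum_uniq.
- by apply/allP => _ /mapP[p _ ->].
Qed.

Lemma distinct_eigenvalues_affine A (e : F) : e != 0 ->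
  has_n_distinct_eigenvalues A -> has_n_distinct_eigenvalues (1%:M + e *: A).
Proof.
move=> e_neq0 [ev [ev_size ev_uniq ev_eig]].
exists (map (fun mu => 1 + e * mu) ev); split.
- by rewrite size_map.
- by rewrite map_inj_uniq // => x y /addrI/(mulfI e_neq0).
apply/allP => _ /mapP[mu /(allP ev_eig)/eigenvalueP[v vA v_neq0] ->].
apply/eigenvalueP; exists v => //.
by rewrite mulmxDr mulmx1 -scalemxAr vA scalerA scalerDl scale1r.
Qed.

Lemma distinct_eigenvalues_map (K : fieldType) (f : {rmorphism F -> K}) A :
  has_n_distinct_eigenvalues A -> has_n_distinct_eigenvalues (map_mx f A).
Proof.
case=> ev [ev_size ev_uniq ev_eig]; exists (map f ev); split.
- by rewrite size_map.
- by rewrite map_inj_uniq //; exact: fmorph_inj.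
- by apply/allP => _ /mapP[mu mu_ev ->]; rewrite eigenvalue_map (allP ev_eig).
Qed.

End DistinctEigenvalues.

Lemma inj_of_disjoint_balls {R : numDomainType} {V : normedZmodType R} {T : eqType}
    (c lam : T -> V) (r : T -> R) :
  (forall p, `|lam p - c p| < r p) ->
  (forall p q, p != q -> r p + r q <= `|c p - c q|) -> injective lam.
Proof.
move=> lam_near c_sep p q lam_pq; apply/eqP; apply: contraT => pq.
have : `|c p - c q| < r p + r q.
  have -> : c p - c q = - (lam p - c p) + (lam q - c q) by rewrite lam_pq opprB addrA subrK.
  by apply: le_lt_trans (ler_normD _ _) _; rewrite normrN ltrD.
by move/lt_le_trans/(_ (c_sep p q pq)); rewrite ltxx.
Qed.

Lemma near0_right_exists {R : realFieldType} (P : R -> Prop) :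
  (\forall e \near 0^'+, P e) -> exists g : R, 0 < g /\ forall e, 0 < e -> e < g -> P e.
Proof.
case=> g /= g_gt0 gP; exists g; split => // e e_gt0 e_lt; apply: gP => //=.
by rewrite sub0r normrN gtr0_norm.
Qed.

Lemma sep_radius_exists {R : realFieldType} {n} (mu : 'I_n -> R) : injective mu ->
  exists rho : R, 0 < rho /\ forall a b, a != b -> 2 * rho < `|mu a - mu b|.
Proof.
move=> mu_inj.
have : \forall r \near 0^'+, forall ab : 'I_n * 'I_n,
    ab.1 != ab.2 -> 2 * r < `|mu ab.1 - mu ab.2|.
  apply: filter_forall => -[a b] /=; have [<-|ab] := eqVneq a b; first exact: nearW.
  near=> r => _; rewrite -ltr_pdivlMl //; near: r; apply: nbhs_right_lt.
  by rewrite mulr_gt0 ?invr_gt0 // normr_gt0 subr_eq0 (inj_eq mu_inj).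
case/near0_right_exists => g [g_gt0 gP]; exists (g / 2); split; first by rewrite divr_gt0.
by move=> a b ab; apply: (gP _ _ _ (a, b)); rewrite ?divr_gt0 ?ltr_pdivrMr ?ltr_pMr ?ltr1n.
Unshelve. all: by end_near.
Qed.

Lemma distinct_eigenvalues_gap {R : realFieldType} {n} (A : 'M[R]_n) :
  has_n_distinct_eigenvalues A ->
  exists (mu : 'I_n -> R) (rho : R),
    [/\ 0 < rho, forall a, root (char_poly A) (mu a),
        forall a, ~~ root (char_poly A) (mu a + rho) &
        forall a b, a != b -> 2 * rho < `|mu a - mu b|].
Proof.
move=> /distinct_eigenvaluesP[mu [mu_inj mu_roots]].
have [rho [rho_gt0 rho_sep]] := sep_radius_exists _ mu_inj.
exists mu, rho; split => // [a|a]; rewrite mu_roots ?codom_f //.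
apply/codomP => -[b murho]; have [ab|ab] := eqVneq a b.
  by move: murho; rewrite -ab; lra.
by have := rho_sep a b ab; rewrite -murho opprD addrA subrr sub0r normrN gtr0_norm //; lra.
Qed.

Lemma near0_affine_dist_gt {R : rcfType} (a b : R[i]) (u v r : R) : a != b ->
  \forall e \near 0^'+, e * r < cnorm (a * (1 + e%:C * u%:C) - b * (1 + e%:C * v%:C)).
Proof.
move=> ab; set w := b * v%:C - a * u%:C.
set D := cnorm (a - b); set K := `|r| + cnorm w + 1.
have D_gt0 : 0 < D by rewrite cnorm_gt0 // subr_eq0.
have K_gt0 : 0 < K by rewrite ltr_wpDl // addr_ge0 ?cnorm_ge0.
near=> e.
have e_gt0 : 0 < e by near: e; exact: nbhs_right_gt.
have e_lt : e * K < D.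
  by rewrite -ltr_pdivlMr //; near: e; apply: nbhs_right_lt; rewrite divr_gt0.
have -> : a * (1 + e%:C * u%:C) - b * (1 + e%:C * v%:C) = (a - b) - e%:C * w by rewrite /w; ring.
have := lerB_dist (a - b : Rcomplex R) (e%:C * w).
rewrite cnormM cnormR gtr0_norm // -/D.
have := ler_norm r; have := cnorm_ge0 w; rewrite /K in e_lt; nra.
Unshelve. all: by end_near.
Qed.

Section BlockPartition.
Context {N S : nat} {L : 'I_S -> nat}.
Hypothesis L_bw : bandwidth_vector N L.

Let start (m : nat) : nat := (\sum_(t < S | (t < m)%N) L t)%N.

Let start_mono {m m'} : (m <= m')%N -> (start m <= start m')%N.
Proof.
move=> le_mm'; rewrite /start [leqLHS]big_mkcond [leqRHS]big_mkcond /=.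
by apply: leq_sum => t _; case: ifP => // /leq_trans->.
Qed.

Let start_end {m} : (S <= m)%N -> start m = N.
Proof.
by move=> le_Sm; case: L_bw => _ <-; apply: eq_bigl => t; rewrite (leq_trans _ le_Sm).
Qed.

Let start_succ (s : 'I_S) : start s.+1 = (Nstart L s + L s)%N.
Proof.
rewrite /start /Nstart (bigD1 s) //= addnC; congr (_ + _)%N.
apply: eq_bigl => t; rewrite ltnS -val_eqE /=.
by case: ltngtP.
Qed.

Lemma Nstart_block_le (s : 'I_S) : (Nstart L s + L s <= N)%N.
Proof. by rewrite -start_succ -(start_end (leqnn S)) start_mono. Qed.

Lemma in_block_exists (i : 'I_N) : exists s, in_block L s i.
Proof.
have ex_m : exists m, (i < start m)%N by exists S; rewrite start_end.
have [[|s] i_lt min_m] := ex_minnP ex_m; first by rewrite /start big_pred0 in i_lt.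
have lt_sS : (s < S)%N.
  rewrite ltnNge; apply/negP => /start_end start_s.
  by have := min_m s; rewrite start_s ltn_ord ltnn => /(_ isT).
exists (Ordinal lt_sS); rewrite /in_block -start_succ i_lt andbT leqNgt.
by apply/negP => /min_m; rewrite ltnn.
Qed.

Lemma in_block_inj (s s' : 'I_S) (i : nat) :
  in_block L s i -> in_block L s' i -> s = s'.
Proof.
wlog lt_ss' : s s' / (s < s')%N.
  by move=> wl bs bs'; case: (ltngtP s s') => [lt|gt|/val_inj//];
    [exact: wl | exact/esym/wl].
rewrite /in_block => /andP[_ i_lt] /andP[le_i _].
have := leq_trans (start_mono lt_ss') le_i; rewrite start_succ.
by rewrite leqNgt i_lt.
Qed.

Definition blk (i : 'I_N) : 'I_S := xchoose (in_block_exists i).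

Lemma blk_eqE (i : 'I_N) (s : 'I_S) : (blk i == s) = in_block L s i.
Proof.
have blkP := xchooseP (in_block_exists i).
by apply/eqP/idP => [<- //|]; exact: in_block_inj.
Qed.

Lemma emb_subproof {s : 'I_S} (a : 'I_(L s)) : (Nstart L s + a < N)%N.
Proof. by apply: leq_trans (Nstart_block_le s); rewrite ltn_add2l. Qed.

Definition emb {s : 'I_S} (a : 'I_(L s)) : 'I_N := Ordinal (emb_subproof a).

(* Only meaningful for i in block s; the default value is junk. *)
Definition unemb (s : 'I_S) (i : 'I_N) : 'I_(L s) :=
  insubd (Ordinal (proj1 L_bw s)) (i - Nstart L s)%N.

Lemma blk_emb {s : 'I_S} (a : 'I_(L s)) : blk (emb a) = s.
Proof. by apply/eqP; rewrite blk_eqE /in_block /= leq_addr ltn_add2l ltn_ord. Qed.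

Lemma emb_inj (s : 'I_S) : injective (@emb s).
Proof. by move=> a b /(congr1 val) /= /addnI /val_inj. Qed.

Lemma embK (s : 'I_S) : cancel (@emb s) (unemb s).
Proof. by move=> a; apply: val_inj; rewrite /= val_insubd addKn ltn_ord. Qed.

Lemma unembK {s : 'I_S} {i : 'I_N} : blk i = s -> emb (unemb s i) = i.
Proof.
move/eqP; rewrite blk_eqE => /andP[le_i i_lt]; apply: val_inj.
by rewrite /= val_insubd ltn_subLR // i_lt subnKC.
Qed.

Lemma card_blocks : #|{: {s : 'I_S & 'I_(L s)}}| = N.
Proof.
rewrite card_tagged sumnE big_map big_enum /=.
by under eq_bigr do rewrite card_ord; case: L_bw.
Qed.

Lemma big_blk (V : nmodType) (s : 'I_S) (F : 'I_N -> V) :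
  \sum_(i | blk i == s) F i = \sum_(a < L s) F (emb a).
Proof.
rewrite (reindex_onto (@emb s) (unemb s)) => [|i /eqP]; last exact: unembK.
by apply: eq_bigl => a; rewrite blk_emb embK !eqxx.
Qed.

End BlockPartition.

Lemma horner_char_poly (F : comNzRingType) n (A : 'M[F]_n) (x : F) :
  (char_poly A).[x] = \det (x%:M - A).
Proof.
rewrite /char_poly -horner_evalE -det_map_mx; congr (\det _); apply/matrixP => i j.
by rewrite !mxE /= /horner_eval hornerD hornerN hornerMn hornerX hornerC.
Qed.

Section BlockPerturbation.
Context {R : rcfType} {N S : nat} {L : 'I_S -> nat}.
Hypothesis L_bw : bandwidth_vector N L.
Variables (W : 'M[R]_N) (d : 'I_S -> R[i]).
Hypothesis d_norm : forall s, cnorm (d s) = 1.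

Local Notation blk := (blk L_bw).
Local Notation emb := (emb L_bw).
Local Notation unemb := (unemb L_bw).
Local Notation Wc := (map_mx (real_complex R) W).

Lemma d_neq0 s : d s != 0.
Proof. by have := d_norm s; apply: contra_eqN => /eqP->; rewrite normr0 eq_sym oner_eq0. Qed.

Definition Pmx (e : R) : 'M[R[i]]_N :=
  diag_mx (\row_i d (blk i)) *m map_mx (real_complex R) (1%:M + e *: W).

Lemma Pmx_entry e i j : Pmx e i j = d (blk i) * ((i == j)%:R + e%:C * Wc i j).
Proof. by rewrite /Pmx mul_diag_mx !mxE rmorphD rmorphM /= rmorphMn rmorph1. Qed.

(* For lam = d s * (1 + e z), the columns of lam - Pmx e in block s are divisible
   by e; shift_sub_Pmx factors them out through colscale. *)
Definition Amx (s : 'I_S) (z : R[i]) : 'M[R[i]]_N := \matrix_(i, j)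
  if blk j == s then z *+ (i == j) - Wc i j else (d s / d (blk j) - 1) *+ (i == j).

Definition Bmx (s : 'I_S) (z : R[i]) : 'M[R[i]]_N := \matrix_(i, j)
  if blk j == s then 0 else (d s * z / d (blk j)) *+ (i == j) - Wc i j.

Definition colscale (s : 'I_S) (e : R) : 'rV[R[i]]_N :=
  \row_j if blk j == s then e%:C else 1.

Lemma shift_sub_Pmx s e z :
  (d s * (1 + e%:C * z))%:M - Pmx e =
  diag_mx (\row_i d (blk i)) *m (Amx s z + e%:C *: Bmx s z) *m diag_mx (colscale s e).
Proof.
apply/matrixP => i j; rewrite mul_mx_diag mul_diag_mx [LHS]mxE [X in _ + X]mxE.
rewrite Pmx_entry !mxE; have := d_neq0 (blk j).
case: (eqVneq i j) => [<-|_]; case: ifP => [/eqP->|_] dj_neq0; rewrite ?mulr1n ?mulr0n.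
- by ring.
- by field.
- by ring.
- by ring.
Qed.

Lemma char_poly_Pmx_shift s e z :
  (char_poly (Pmx e)).[d s * (1 + e%:C * z)] =
  \prod_i d (blk i) * \det (Amx s z + e%:C *: Bmx s z) * \prod_i colscale s e 0 i.
Proof.
rewrite horner_char_poly shift_sub_Pmx !det_mulmx !det_diag.
by congr (_ * _ * _); apply: eq_bigr => i _; rewrite mxE.
Qed.

Local Notation Wb s := (map_mx (real_complex R) (diag_block L W s)).

Lemma mx_nat_emb s (a b : 'I_(L s)) :
  mx_nat W (Nstart L s + a) (Nstart L s + b) = W (emb a) (emb b).
Proof.
rewrite /mx_nat !insubT ?emb_subproof // => lt_a lt_b.
by congr (W _ _); apply: val_inj.
Qed.

Lemma Amx_mul_supported {s} z {v : 'rV_N} : (forall i, blk i != s -> v 0 i = 0) ->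
  forall j, (v *m Amx s z) 0 j =
  if blk j == s then (\row_a v 0 (emb a) *m (z%:M - Wb s)) 0 (unemb s j) else 0.
Proof.
move=> v_supp j; rewrite mxE (bigID (fun i => blk i == s)) /= [X in _ + X]big1; last first.
  by move=> i /v_supp->; rewrite mul0r.
rewrite addr0 big_blk mxE; case: ifP => [/eqP blk_j|blk_j].
  rewrite -{1}(unembK L_bw blk_j); apply: eq_bigr => a _.
  by rewrite !mxE blk_emb eqxx (inj_eq (emb_inj L_bw _)) mx_nat_emb.
apply: big1 => a _; rewrite !mxE blk_j.
have /negPf-> : emb a != j by apply: contraFN blk_j => /eqP<-; rewrite blk_emb.
by rewrite mulr0n mulr0.
Qed.

Lemma det_Amx_eq0 s z : (forall t, t != s -> d t != d s) ->
  (\det (Amx s z) == 0) = root (char_poly (Wb s)) z.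
Proof.
move=> d_sep; rewrite rootE horner_char_poly.
apply/det0P/det0P => [[v v_neq0 vA0] | [w w_neq0 wM0]].
  have v_supp i : blk i != s -> v 0 i = 0.
    move=> blk_i; move/rowP/(_ i): vA0; rewrite !mxE (bigD1 i) //= big1 => [|k k_neq_i].
      rewrite mxE (negPf blk_i) eqxx mulr1n addr0 => /eqP.
      rewrite mulf_eq0 subr_eq0 => /orP[/eqP //|/eqP/divr1_eq ds_eq].
      by move: (d_sep _ blk_i); rewrite ds_eq eqxx.
    by rewrite mxE (negPf blk_i) (negPf k_neq_i) mulr0n mulr0.
  exists (\row_a v 0 (emb a)).
    apply: contraNneq v_neq0 => /rowP w0; apply/eqP/rowP => i; rewrite mxE.
    have [blk_i|/v_supp//] := eqVneq (blk i) s.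
    by have := w0 (unemb s i); rewrite !mxE (unembK L_bw blk_i).
  apply/rowP => b; move/rowP/(_ (emb b)): vA0.
  by rewrite (Amx_mul_supported _ v_supp) blk_emb eqxx embK !mxE.
pose v := \row_i if blk i == s then w 0 (unemb s i) else 0.
have v_supp i : blk i != s -> v 0 i = 0 by rewrite mxE => /negPf->.
have v_emb : \row_a v 0 (emb a) = w.
  by apply/rowP => a; rewrite !mxE blk_emb eqxx embK.
exists v.
  by apply: contraNneq w_neq0 => v0; rewrite -v_emb v0; apply/eqP/rowP => a; rewrite !mxE.
apply/rowP => j; rewrite (Amx_mul_supported _ v_supp) v_emb wM0 !mxE.
by case: ifP.
Qed.

Lemma cnorm_prod_d : cnorm (\prod_i d (blk i)) = 1.
Proof. by rewrite cnorm_prod big1 // => i _; rewrite d_norm. Qed.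

Lemma colscale_prod_gt0 s e : 0 < e -> 0 < cnorm (\prod_i colscale s e 0 i).
Proof.
move=> e_gt0; apply: cnorm_gt0; rewrite prodf_seq_neq0; apply/allP => i _ /=.
by rewrite mxE; case: ifP => _; rewrite ?oner_eq0 // fmorph_eq0 gt_eqF.
Qed.

Lemma Pmx_root_near s (mu rho : R) : 0 < rho -> (forall t, t != s -> d t != d s) ->
  root (char_poly (diag_block L W s)) mu -> ~~ root (char_poly (diag_block L W s)) (mu + rho) ->
  \forall e \near 0^'+, exists lam, root (char_poly (Pmx e)) lam /\
    cnorm (lam - d s * (1 + e%:C * mu%:C)) < e * rho.
Proof.
move=> rho_gt0 d_sep mu_root murho_nroot.
have root_Wb x : root (char_poly (Wb s)) x%:C = root (char_poly (diag_block L W s)) x.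
  by rewrite -map_char_poly rootE horner_map fmorph_eq0.
have detA1 : \det (Amx s mu%:C) = 0 by apply/eqP; rewrite det_Amx_eq0 // root_Wb.
set A2 := Amx s (mu + rho)%:C; set a := cnorm (\det A2); set K : R := 2 ^+ N.+1.
have a_gt0 : 0 < a by apply: cnorm_gt0; rewrite det_Amx_eq0 // root_Wb.
have K_gt0 : 0 < K by rewrite exprn_gt0.
near=> e.
have e_gt0 : 0 < e by near: e; exact: nbhs_right_gt.
have T1_lt : K * cnorm (\det (Amx s mu%:C + e%:C *: Bmx s mu%:C)) < a / 2.
  rewrite -ltr_pdivlMl // -[X in cnorm X]subr0 -[X in _ - X]detA1.
  by near: e; apply: det_addZ_near; rewrite mulr_gt0 ?invr_gt0 ?divr_gt0.
have T2_gt : a / 2 < cnorm (\det (A2 + e%:C *: Bmx s (mu + rho)%:C)).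
  have : cnorm (\det (A2 + e%:C *: Bmx s (mu + rho)%:C) - \det A2) < a / 2.
    by near: e; apply: det_addZ_near; rewrite divr_gt0.
  have := lerB_dist (\det A2 : Rcomplex R) (\det (A2 + e%:C *: Bmx s (mu + rho)%:C)).
  by rewrite distrC -/a; lra.
apply: (@poly_root_near R _ _ (d s * (1 + e%:C * (mu + rho)%:C))).
  have -> : d s * (1 + e%:C * (mu + rho)%:C) - d s * (1 + e%:C * mu%:C) =
            d s * ((e * rho)%:C) by rewrite !rmorphD rmorphM /=; ring.
  by rewrite cnormM d_norm mul1r cnormR ger0_norm // mulr_ge0 // ltW.
rewrite size_char_poly !char_poly_Pmx_shift !cnormM cnorm_prod_d !mul1r -/K mulrA.
by rewrite ltr_pM2r ?colscale_prod_gt0 //; exact: lt_trans T1_lt T2_gt.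
Unshelve. all: by end_near.
Qed.

Lemma Pmx_distinct_eigenvalues : (forall s t, s != t -> d s != d t) ->
  (forall s, has_n_distinct_eigenvalues (diag_block L W s)) ->
  \forall e \near 0^'+, has_n_distinct_eigenvalues (Pmx e).
Proof.
move=> d_inj W_eig.
have /fin_all_exists[mu /fin_all_exists[rho mu_rho]] :=
  fun s => distinct_eigenvalues_gap _ (W_eig s).
pose T := {s : 'I_S & 'I_(L s)}.
pose c (p : T) (e : R) := d (tag p) * (1 + e%:C * (mu _ (tagged p))%:C).
have near_roots : \forall e \near 0^'+, forall p : T,
    exists lam, root (char_poly (Pmx e)) lam /\ cnorm (lam - c p e) < e * rho (tag p).
  apply: filter_forall => -[s a]; have [rho_gt0 mu_root mu_nroot _] := mu_rho s.
  by apply: Pmx_root_near => // t ts; exact: d_inj.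
have near_sep : \forall e \near 0^'+, forall pq : T * T, tag pq.1 != tag pq.2 ->
    e * rho (tag pq.1) + e * rho (tag pq.2) <= cnorm (c pq.1 e - c pq.2 e).
  apply: filter_forall => -[[s a] [t b]] /=; have [_|st] := eqVneq s t; first exact: nearW.
  have := near0_affine_dist_gt (d s) (d t) (mu s a) (mu t b) (rho s + rho t) (d_inj s t st).
  by apply: filterS => e lt _; rewrite -mulrDr; apply: ltW.
near=> e.
have e_gt0 : 0 < e by near: e; exact: nbhs_right_gt.
have /fin_all_exists[lam lam_spec] : forall p : T, exists lam,
    root (char_poly (Pmx e)) lam /\ cnorm (lam - c p e) < e * rho (tag p).
  by near: e; exact: near_roots.
have sep_e : forall pq : T * T, tag pq.1 != tag pq.2 ->
    e * rho (tag pq.1) + e * rho (tag pq.2) <= cnorm (c pq.1 e - c pq.2 e).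
  by near: e; exact: near_sep.
apply: (distinct_eigenvalues_inj _ _ lam (card_blocks L_bw)); last first.
  by move=> p; rewrite eigenvalue_root_char; case: (lam_spec p).
apply: (@inj_of_disjoint_balls _ (Rcomplex R) _ (c^~ e) lam (fun p => e * rho (tag p))).
  by move=> p; case: (lam_spec p).
move=> [s a] [t b] pq; have [st|st] := eqVneq s t; last exact: (sep_e (_, _)).
subst t; have ab : a != b by apply: contraNneq pq => ->.
have [_ _ _ rho_sep] := mu_rho s.
have -> : c (Tagged (fun s => 'I_(L s)) a) e - c (Tagged (fun s => 'I_(L s)) b) e =
          d s * (e * (mu s a - mu s b))%:C.
  by rewrite /c /= rmorphM rmorphB /=; ring.
rewrite cnormM d_norm mul1r cnormR normrM gtr0_norm //.
by have := rho_sep a b ab; nra.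
Unshelve. all: by end_near.
Qed.

End BlockPerturbation.

Section Phases.
Context {R : realType}.

Lemma phase0 (b : R) : phase 0 b = 1.
Proof. by rewrite /phase mulr0z mulr0 mul0r cos0 sin0 oppr0. Qed.

Lemma cnorm_phase k (b : R) : cnorm (phase k b) = 1.
Proof. by rewrite -[LHS]/(Normc.normc _) /= sqrrN cos2Dsin2 sqrtr1. Qed.

Context {N S : nat} {L : 'I_S -> nat}.
Hypothesis L_bw : bandwidth_vector N L.

Lemma Dmat_diag k (beta : 'I_S -> R) :
  Dmat N L k beta = diag_mx (\row_i phase k (beta (blk L_bw i))).
Proof.
apply/matrixP => i j; rewrite !mxE; have [_|_] := eqVneq i j; rewrite ?mulr1n ?mulr0n //.
rewrite (bigD1 (blk L_bw i)) -?blk_eqE //= big1 ?addr0 // => s /andP[].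
by rewrite -blk_eqE => /eqP->; rewrite eqxx.
Qed.

Lemma Pmat_Pmx k (beta : 'I_S -> R) (W : 'M[R]_N) e :
  Pmat L k beta W e = Pmx L_bw W (fun s => phase k (beta s)) e.
Proof. by rewrite /Pmat Dmat_diag. Qed.

Lemma Pmat0 (beta : 'I_S -> R) (W : 'M[R]_N) e :
  Pmat L 0 beta W e = map_mx (real_complex R) (1%:M + e *: W).
Proof.
rewrite Pmat_Pmx /Pmx; have -> : \row_i phase 0 (beta (blk L_bw i)) = const_mx 1.
  by apply/rowP => i; rewrite !mxE phase0.
by rewrite diag_const_mx mul1mx.
Qed.

End Phases.

Theorem theorem3p3 (R : realType) (N S : nat) (L : 'I_S -> nat)
  (Wd : 'M[R]_N) (beta : 'I_S -> R) (k : int) :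
  (1 <= N)%N -> (1 <= S <= N)%N ->
  bandwidth_vector N L ->
  admissible L Wd ->
  Gamma_set beta ->
  exists gamma : R, 0 < gamma /\
    forall eps : R, 0 < eps -> eps < gamma ->
      has_n_distinct_eigenvalues (Pmat L k beta Wd eps).
Proof.
move=> _ _ L_bw [_ _ _ Wd_eig Wd_blocks_eig] beta_Gamma.
have [-> | k_neq0] := eqVneq k 0.
  exists 1; split => // eps eps_gt0 _; rewrite (Pmat0 L_bw).
  by apply/distinct_eigenvalues_map/distinct_eigenvalues_affine; rewrite ?gt_eqF.
apply: near0_right_exists; near=> eps; rewrite (Pmat_Pmx L_bw); near: eps.
apply: Pmx_distinct_eigenvalues => // [s|s t]; first exact: cnorm_phase.
exact: beta_Gamma.
Unshelve. all: by end_near.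
Qed.
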